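(* Consider binary classification with $\ell_1$ loss: $y:\mathcal{X}\to[0,1]$, every $h\in\mathcal{H}$ takes values in $\{0,1\}$, and $l(a,b)=|a-b|$. Let $p_s$ be a probability distribution on $\mathcal{X}$, let $h_p^*\in\arg\min_{h\in\mathcal{H}}\mathcal{L}_p(h)$, and let $\{(h_k,w_k)\}_{k=1}^K$ (with $h_k\in\mathcal{H}$, $w_k:\mathcal{X}\to[0,1]$ measurable, $\sum_k w_k(x)=1$) be an optimal model ensemble. Then for every $h\in\mathcal{H}$, $$\mathcal{L}_p(h_p^* )\le\mathcal{L}_p(h)\le\mathcal{L}_p(h_p^* )+\mathcal{L}_{p_s}\Big(h,\sum_{k=1}^K w_k\cdot h_k\Big)+\tfrac12\,d_{\bar{\mathcal{H}}\triangle\bar{\mathcal{H}}}(p,p_s).$$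
   Context: $\mathcal{X}$ is a measurable space with fixed measurable labeling function $y$. For a distribution $q$ on $\mathcal{X}$ and measurable real functions $g,g'$: $\mathcal{L}_q(g)=\mathbf{E}_{x\sim q}[|g(x)-y(x)|]$ and $\mathcal{L}_q(g,g')=\mathbf{E}_{x\sim q}[|g(x)-g'(x)|]$. There are $K$ clients with distributions $p_k$ on $\mathcal{X}$ and positive integers $n_k$; $\pi_k=n_k/\sum_j n_j$, $p=\sum_k\pi_k p_k$. The ensemble $\sum_k w_k\cdot h_k$ is $x\mapsto\sum_k w_k(x)h_k(x)$; it is an optimal model ensemble if $\mathcal{L}_p(\sum_k w_k\cdot h_k)\le\min_{h\in\mathcal{H}}\mathcal{L}_p(h)$. The spanned class is $\bar{\mathcal{H}}=\{\sum_{k=1}^K w_k\cdot h_k:\ h_k\in\mathcal{H},\ w_k:\mathcal{X}\to[0,1]\text{ measurable},\ \sum_k w_k(x)=1\ \forall x\}$, and $d_{\bar{\mathcal{H}}\triangle\bar{\mathcal{H}}}(q,q')=2\sup_{g,g'\in\bar{\mathcal{H}}}|\mathcal{L}_q(g,g')-\mathcal{L}_{q'}(g,g')|$. *)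

From HB Require Import structures.
From mathcomp Require Import all_boot all_order all_algebra.
From mathcomp Require Import all_classical all_reals all_analysis.
Set Implicit Arguments. Unset Strict Implicit. Unset Printing Implicit Defensive.
Import Order.TTheory GRing.Theory Num.Theory.
Local Open Scope classical_set_scope.
Local Open Scope ring_scope.

Section Defs.
Context {d : measure_display} {T : measurableType d} {R : realType}.

Definition Lq2 (q : probability T R) (g g' : T -> R) : \bar R :=
  (\int[q]_x (`|g x - g' x|)%:E)%E.

Definition Lq (y : T -> R) (q : probability T R) (g : T -> R) : \bar R :=
  Lq2 q g y.

Definition ens (K : nat) (w h : 'I_K -> T -> R) : T -> R :=
  fun x => \sum_(k < K) w k x * h k x.

Definition weights (K : nat) (w : 'I_K -> T -> R) : Prop :=
  (forall k, measurable_fun setT (w k)) /\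
  (forall k x, 0 <= w k x <= 1) /\
  (forall x, \sum_(k < K) w k x = 1).

Definition Hbar (K : nat) (H : set (T -> R)) : set (T -> R) :=
  [set g | exists (h w : 'I_K -> T -> R),
     (forall k, H (h k)) /\ weights w /\ g = ens w h].

Definition dHH (K : nat) (H : set (T -> R)) (q q' : probability T R) : \bar R :=
  (2%:E * ereal_sup [set r | exists g g', Hbar K H g /\ Hbar K H g' /\
                      r = `|Lq2 q g g' - Lq2 q' g g'|])%E.

Definition piw (K : nat) (n : 'I_K -> nat) (k : 'I_K) : R :=
  (n k)%:R / (\sum_(j < K) n j)%:R.

Definition is_mixture (K : nat) (n : 'I_K -> nat) (pk : 'I_K -> probability T R)
  (p : probability T R) : Prop :=
  forall A, measurable A -> p A = (\sum_(k < K) (piw n k)%:E * pk k A)%E.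

End Defs.

From HB Require Import structures.
From mathcomp Require Import all_boot all_order all_algebra.
From mathcomp Require Import all_classical all_reals all_analysis.
From mathcomp Require Import measurable_realfun.
Import Order.TTheory GRing.Theory Num.Theory.
Local Open Scope classical_set_scope.
Local Open Scope ring_scope.

(* Write g for the optimal ensemble.  By the triangle inequality for L1 losses,
   L_p(h) <= L_p(g) + L_p(h, g), and L_p(g) <= L_p(h_p^* ) by optimality of g.
   Both h (with constant weights) and g lie in the spanned class, so
   L_p(h, g) <= L_{p_s}(h, g) + |L_p(h, g) - L_{p_s}(h, g)|, whose last term is
   at most half of d_{H̄ΔH̄}(p, p_s).  All losses live in [0, +oo] and the
   inequalities hold there without finiteness. *)

Lemma lee_addr_abs_sub {R : realDomainType} (a b : \bar R) :
  (b != -oo -> a <= b + `|a - b|)%E.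
Proof.
case: a => [r| |] //; case: b => [s| |] // _.
- by rewrite -EFinB -EFinD lee_fin -lerBlDl ler_norm.
- by rewrite leey.
Qed.

Section losses.
Context {d : measure_display} {T : measurableType d} {R : realType}.
Implicit Types (q : probability T R) (f g e : T -> R).

Lemma Lq2_ge0 q f g : (0 <= Lq2 q f g)%E.
Proof. by apply: integral_ge0 => x _; rewrite lee_fin. Qed.

Lemma measurable_abs_sub f g : measurable_fun setT f -> measurable_fun setT g ->
  measurable_fun setT (fun x => (`|f x - g x|)%:E).
Proof. by move=> mf mg; do 2 apply: measurableT_comp => //; exact: measurable_funB. Qed.

Lemma Lq2_triangle q f g e :
  measurable_fun setT f -> measurable_fun setT g -> measurable_fun setT e ->
  (Lq2 q f g <= Lq2 q f e + Lq2 q e g)%E.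
Proof.
move=> mf mg me; rewrite /Lq2 -ge0_integralD //; try exact: measurable_abs_sub.
apply: ge0_le_integral => //.
- exact: measurable_abs_sub.
- by apply: emeasurable_funD; exact: measurable_abs_sub.
- by move=> x _; rewrite lee_fin -[f x - g x](subrKA (e x)) ler_normD.
Qed.

Lemma Lq_triangle (y : T -> R) q f g :
  measurable_fun setT y -> measurable_fun setT f -> measurable_fun setT g ->
  (Lq y q f <= Lq y q g + Lq2 q f g)%E.
Proof. by move=> my mf mg; rewrite addeC; exact: Lq2_triangle. Qed.

End losses.

Section ensembles.
Context {d : measure_display} {T : measurableType d} {R : realType}.
Variables (K : nat) (H : set (T -> R)).

Lemma measurable_ens (w h : 'I_K -> T -> R) :
  (forall k, measurable_fun setT (w k)) -> (forall k, measurable_fun setT (h k)) ->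
  measurable_fun setT (ens w h).
Proof. by move=> mw mh; apply: measurable_sum => k; exact: measurable_funM. Qed.

Lemma ens_cst (w : 'I_K -> T -> R) (g : T -> R) :
  (forall x, \sum_(k < K) w k x = 1) -> ens w (fun=> g) = g.
Proof. by move=> w1; apply/funext => x; rewrite /ens -big_distrl /= w1 mul1r. Qed.

Lemma Hbar_ens (w h : 'I_K -> T -> R) :
  (forall k, H (h k)) -> weights w -> Hbar K H (ens w h).
Proof. by move=> Hh W; exists h, w. Qed.

Lemma sub_Hbar (w : 'I_K -> T -> R) : weights w -> H `<=` Hbar K H.
Proof. by move=> W g Hg; rewrite -(@ens_cst w g W.2.2); exact: Hbar_ens. Qed.

Lemma Lq2_le_dHH (q q' : probability T R) (g g' : T -> R) :
  Hbar K H g -> Hbar K H g' ->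
  (Lq2 q g g' <= Lq2 q' g g' + (2^-1)%:E * dHH K H q q')%E.
Proof.
move=> Hg Hg'; rewrite /dHH muleA -EFinM mulVf ?mul1e //.
have Lq2_neqNy : Lq2 q' g g' != -oo%E.
  by rewrite gt_eqF // (lt_le_trans _ (Lq2_ge0 _ _ _)).
apply: le_trans (lee_addr_abs_sub _ _ Lq2_neqNy) _.
by apply: leeD => //; apply: ereal_sup_ubound; exists g, g'.
Qed.

End ensembles.

Theorem corollary1 (d : measure_display) (T : measurableType d) (R : realType)
  (y : T -> R) (H : set (T -> R)) (K : nat) (n : 'I_K -> nat)
  (pk : 'I_K -> probability T R) (p ps : probability T R)
  (hstar : T -> R) (hk wk : 'I_K -> T -> R) :
  measurable_fun setT y ->
  (forall x, 0 <= y x <= 1) ->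
  (forall h, H h -> measurable_fun setT h /\ (forall x, h x = 0 \/ h x = 1)) ->
  (forall k, (0 < n k)%N) ->
  is_mixture n pk p ->
  H hstar -> (forall h, H h -> (Lq y p hstar <= Lq y p h)%E) ->
  (forall k, H (hk k)) -> weights wk ->
  (Lq y p (ens wk hk) <= ereal_inf [set Lq y p h | h in H])%E ->
  forall h, H h ->
    (Lq y p hstar <= Lq y p h)%E /\
    (Lq y p h <= Lq y p hstar + Lq2 ps h (ens wk hk) + (2^-1)%:E * dHH K H p ps)%E.
Proof.
move=> my _ HM _ _ Hstar hstar_opt Hk W ens_opt h Hh; split; first exact: hstar_opt.
have mens : measurable_fun setT (ens wk hk).
  by apply: measurable_ens => k; [exact: W.1 | exact: (HM _ (Hk k)).1].
have ens_le_hstar : (Lq y p (ens wk hk) <= Lq y p hstar)%E.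
  by apply: le_trans ens_opt _; apply: ereal_inf_lbound; exists hstar.
apply: le_trans (Lq_triangle _ _ _ _ my (HM _ Hh).1 mens) _.
rewrite -(addeA (Lq y p hstar)); apply: leeD ens_le_hstar _.
by apply: Lq2_le_dHH; [exact: sub_Hbar W _ Hh | exact: Hbar_ens].
Qed.
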